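(* Let $p\geq 7$ be a prime and $q$ an odd prime with $q<p$. Let $X$ be a connected vertex-transitive graph of order $2pq$, let $G$ be a minimal transitive subgroup of $\mathrm{Aut}(X)$, and let $N$ be a nontrivial normal subgroup of $G$ whose orbits form a complete block system $\mathcal{B}$ of $G$ with blocks of size $r$, where $r\in\{2p,2q,pq\}$. Let $N_0$ be a minimal normal subgroup of $G$ whose orbits are the same blocks as those of $N$. If $N_0$ acts unfaithfully on some block of $\mathcal{B}$, then for any two blocks $A,B\in\mathcal{B}$ that are adjacent in the quotient graph $X_{\mathcal{B}}$, the bipartite subgraph $X[A,B]$ is isomorphic to $K_{r,r}$; consequently $X$ contains a Hamilton cycle.
   Context: A transitive subgroup $G$ of $\mathrm{Aut}(X)$ is minimal transitive if no proper subgroup of $G$ is transitive on $V(X)$. The quotient graph $X_{\mathcal{B}}$ has vertex set $\mathcal{B}$, two blocks being adjacent if some vertex of one is adjacent in $X$ to some vertex of the other. For disjoint $A,B\subseteq V(X)$, $X[A,B]$ is the bipartite subgraph with parts $A,B$ consisting of all edges of $X$ between $A$ and $B$. $N_0$ acts unfaithfully on a block $A$ if some nonidentity element of $N_0$ fixes every vertex of $A$. *)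

From mathcomp Require Import all_boot all_fingroup all_solvable.
Set Implicit Arguments. Unset Strict Implicit. Unset Printing Implicit Defensive.


Definition simple_graph (T : finType) (e : rel T) : Prop :=
  symmetric e /\ irreflexive e.

Definition autg (T : finType) (e : rel T) : {set {perm T}} :=
  [set g : {perm T} | [forall x, [forall y, e (g x) (g y) == e x y]]].

Definition connected_graph (T : finType) (e : rel T) : Prop :=
  forall x y : T, connect e x y.

Definition vertex_transitive (T : finType) (e : rel T) : Prop :=
  [transitive autg e, on [set: T] | 'P].

Definition minimal_transitive (T : finType) (e : rel T) (G : {group {perm T}}) : Prop :=
  [/\ G \subset autg e, [transitive G, on [set: T] | 'P] &
      forall H : {group {perm T}}, H \proper G -> ~~ [transitive H, on [set: T] | 'P]].

Definition orbit_blocks (T : finType) (N : {group {perm T}}) : {set {set T}} :=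
  [set orbit 'P N x | x : T].

Definition hamiltonian (T : finType) (e : rel T) : Prop :=
  exists s : seq T, [/\ uniq s, size s = #|T| & path.cycle e s].

From mathcomp Require Import all_boot all_fingroup all_solvable.
Set Implicit Arguments. Unset Strict Implicit. Unset Printing Implicit Defensive.

(* Since its orbits have size l1*l2 for two distinct primes l1 < l2, the minimal normal
   subgroup N0 of G is nonabelian; it is generated by the G-conjugates of a minimal normal
   subgroup M of N0, which are nonsolvable and commute pairwise.  On a block at most one
   conjugate of M acts nontrivially: two commuting faithful nonsolvable components would
   both have orbits of size l2, one would then preserve the orbits of the other, and a
   semiregular group of order dividing l1*l2 is solvable.  The blocks on which a fixed
   conjugate acts nontrivially form a block of imprimitivity of G acting on the prime
   number of blocks; since N0 is unfaithful on some block, each such set is a single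
   block.  Hence the pointwise stabiliser in N0 of a block A is transitive on every other
   block B, so X[A,B] is complete as soon as it has an edge.  Finally an element of G of
   prime-power order permutes the blocks cyclically with consecutive blocks adjacent,
   which threads a Hamilton cycle through them. *)

Import GroupScope.

Lemma dvd_prime2_ge_eq l1 l2 e d : prime l1 -> prime l2 -> l1 < l2 ->
  (e * d = l1 * l2)%N -> l2 <= d -> e != 1%N -> d = l2.
Proof.
move=> pl1 pl2 lt12 ed le_l2d ne1.
have : 0 < e * d by rewrite ed muln_gt0 !prime_gt0.
rewrite muln_gt0 => /andP [e_gt0 _].
have le_el1 : e <= l1 by rewrite -(leq_pmul2r (prime_gt0 pl2)) -ed leq_pmul2l.
have cop : coprime e l2.
  rewrite coprime_sym prime_coprime //; apply/negP => /(dvdn_leq e_gt0).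
  by rewrite leqNgt (leq_ltn_trans le_el1).
have /(prime_nt_dvdP pl1 ne1) el1 : (e %| l1)%N by rewrite -(Gauss_dvdl _ cop) -ed dvdn_mulr.
by apply/eqP; rewrite -(eqn_pmul2l (prime_gt0 pl1)) -{1}el1 ed.
Qed.

Section PrimeProductOrder.
Variables (gT : finGroupType) (a b : nat).
Hypotheses (pr_a : prime a) (pr_b : prime b) (lt_ba : b < a).
Implicit Types H P : {group gT}.

Lemma indexg_Sylow_dvd_prime2 H P : (#|H| %| a * b)%N -> a.-Sylow(H) P -> (#|H : P| %| b)%N.
Proof.
move=> dvH /and3P [_ _ a'HP].
have cop : coprime #|H : P| a by rewrite coprime_sym prime_coprime // -p'natE.
by rewrite -(Gauss_dvdr _ cop) (dvdn_trans (dvdn_indexg H P)).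
Qed.

(* The number of Sylow [a]-subgroups divides [b < a] and is 1 modulo [a]. *)
Lemma Sylow_normal_dvd_prime2 H P : (#|H| %| a * b)%N -> a.-Sylow(H) P -> P <| H.
Proof.
move=> dvH sylP; have sPH := pHall_sub sylP.
have dvS : (#|'Syl_a(H)| %| b)%N.
  rewrite (card_Syl sylP); apply: dvdn_trans (indexg_Sylow_dvd_prime2 dvH sylP).
  by apply: indexgS; rewrite subsetI sPH normG.
have : #|'Syl_a(H)| = 1%N.
  have := card_Syl_mod H pr_a; case/primeP: pr_b => b_gt1 /(_ _ dvS) /orP [] /eqP -> //.
  by rewrite modn_small // => b1; rewrite b1 in b_gt1.
rewrite (card_Syl sylP) => /eqP; rewrite indexg_eq1 subsetI => /andP [_ nPH].
by rewrite /normal sPH.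
Qed.

Lemma solvable_dvd_prime2 H : (#|H| %| a * b)%N -> solvable H.
Proof.
move=> dvH; have [P sylP] := Sylow_exists a H.
have nPH := Sylow_normal_dvd_prime2 dvH sylP.
rewrite (series_sol nPH) (pgroup_sol (pHall_pgroup sylP)) /=.
apply: (@pgroup_sol _ b); rewrite /pgroup card_quotient ?normal_norm //.
exact: pnat_dvd (indexg_Sylow_dvd_prime2 dvH sylP) (pnat_id pr_b).
Qed.

End PrimeProductOrder.

Lemma minnormal_cents (gT : finGroupType) (N M1 M2 : {group gT}) :
  minnormal M1 N -> minnormal M2 N -> M1 \subset N -> M2 \subset N -> M1 :!=: M2 ->
  M1 \subset 'C(M2).
Proof.
move=> /mingroupP [/andP [_ nM1] min1] /mingroupP [/andP [_ nM2] min2] sM1 sM2 neM.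
have nI : N \subset 'N(M1 :&: M2) := normsI nM1 nM2.
have I1 : M1 :&: M2 = 1.
  apply/eqP; apply: contraNT neM => ntI.
  have gI : (M1 :&: M2 != 1) && (N \subset 'N(M1 :&: M2)) by rewrite ntI nI.
  apply/eqP; apply: etrans (esym (min1 [group of M1 :&: M2] gI (subsetIl _ _))) _.
  exact: min2 [group of M1 :&: M2] gI (subsetIr _ _).
apply/commG1P/trivgP; rewrite -I1 commg_subI //.
  by rewrite subsetI subxx (subset_trans sM1 nM2).
by rewrite subsetI subxx (subset_trans sM2 nM1).
Qed.

Section MinnormalConjugates.
Variables (gT : finGroupType) (G N M : {group gT}).
Hypotheses (nNG : G \subset 'N(N)) (minM : minnormal M N) (sMN : M \subset N).

Lemma minnormal_conj g : g \in G -> minnormal (M :^ g) N.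
Proof.
move=> gG; have [/andP [ntM nMN] minP] := mingroupP minM.
have conjN h : h \in G -> N :^ h = N by move=> hG; apply/normP/(subsetP nNG).
apply/mingroupP; split=> [|Y /andP [ntY nYN] sYM].
  by rewrite conjsg_eq1 ntM normJ -{1}(conjN g gG) conjSg.
have nYN' : N \subset 'N(Y :^ g^-1) by rewrite normJ -{1}(conjN _ (groupVr gG)) conjSg.
have := minP [group of Y :^ g^-1]; rewrite /= conjsg_eq1 ntY nYN' sub_conjgV => /(_ isT sYM) <-.
by rewrite conjsgKV.
Qed.

Lemma conj_sub_minnormal g : g \in G -> M :^ g \subset N.
Proof. by move=> gG; rewrite -(normP (subsetP nNG g gG)) conjSg. Qed.

Lemma norm_conj_minnormal g : g \in G -> N \subset 'N(M :^ g).
Proof. by move/minnormal_conj/mingroupP => [/andP []]. Qed.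

Hypothesis minN : minnormal N G.

Lemma minnormal_gen_class_support : N :=: <<class_support M G>>.
Proof.
have [/andP [ntM _] _] := mingroupP minM.
have [_ minP] := mingroupP minN; apply/esym/minP; last first.
  by rewrite gen_subG class_support_sub_norm.
rewrite (subset_trans (class_support_norm M G) (norm_gen _)) andbT.
apply: contraNneq ntM => cs1; apply/eqP/trivgP; rewrite -cs1.
exact: subset_trans (sub_class_support G M) (sub_gen _).
Qed.

Lemma minnormal_sub_conj_mul_cent g : g \in G -> N \subset M :^ g * 'C(M :^ g).
Proof.
move=> gG; rewrite -norm_joinEl ?norms_cent ?normG //.
rewrite {1}minnormal_gen_class_support gen_subG class_supportEr.
apply/bigcupsP => h hG; have [-> | ne] := eqVneq (M :^ h) (M :^ g); first exact: joing_subl.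
apply: subset_trans (joing_subr _ _).
exact: minnormal_cents (minnormal_conj hG) (minnormal_conj gG)
  (conj_sub_minnormal hG) (conj_sub_minnormal gG) ne.
Qed.

Lemma minnormal_prime_dvd l : prime l -> (l %| #|N|)%N -> (l %| #|M|)%N.
Proof.
move=> pl; apply: contraLR => l'M; rewrite -p'natE // -/(pgroup _ N).
apply: pgroupS (pcore_pgroup l^' N).
rewrite {1}minnormal_gen_class_support gen_subG class_supportEr; apply/bigcupsP => h hG.
apply: pcore_max; first by rewrite /pgroup p'natE // cardJg.
by rewrite /normal conj_sub_minnormal // norm_conj_minnormal.
Qed.

(* A solvable conjugate would be abelian (it is characteristically simple),
   and then [N], generated by pairwise commuting abelian conjugates, would be abelian. *)
Lemma nonsolvable_conj_minnormal g : g \in G -> ~~ abelian N -> ~~ solvable (M :^ g).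
Proof.
move=> gG; apply: contra => solMg.
have : is_abelem (M :^ g).
  exact: charsimple_solvable (minnormal_charsimple (minnormal_conj gG)) solMg.
case/is_abelemP => l _ /abelem_abelian; rewrite abelianJ => abM.
rewrite minnormal_gen_class_support abelian_gen class_supportEr.
apply/centsP => x /bigcupP [h1 h1G xM] y /bigcupP [h2 h2G yM].
have [e12 | ne] := eqVneq (M :^ h1) (M :^ h2).
  have abMh1 : abelian (M :^ h1) by rewrite abelianJ.
  by rewrite -e12 in yM; apply: (centsP abMh1).
apply: (centsP (minnormal_cents (minnormal_conj h1G) (minnormal_conj h2G) _ _ ne)) => //.
  exact: conj_sub_minnormal.
exact: conj_sub_minnormal.
Qed.

End MinnormalConjugates.

Section PermOrbits.
Variable T : finType.
Implicit Types X Y Z : {group {perm T}}.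

Lemma astab1_sub_astab_orbit Y Z c :
  Z \subset 'C(Y) -> 'C_Z[c | 'P] \subset 'C(orbit 'P Y c | 'P).
Proof.
move=> cZY; apply/subsetP => z /setIP [zZ /astab1P /= zc].
apply/astabP => _ /orbitP [y yY <-] /=.
by rewrite !apermE -permM -(centP (subsetP cZY z zZ) y yY) permM -[z c]/(aperm c z) zc.
Qed.

Lemma orbit_conj_perm X n c :
  n \in 'N(X) -> orbit 'P X (n c) = ('P^*)%act (orbit 'P X c) n.
Proof. by move/normP => nXn; have := setact_orbit (perm_action T) X c n; rewrite nXn => /esym. Qed.

Section OrbitBlocks.
Variable N : {group {perm T}}.

Lemma mem_orbit_blocks_conj C h :
  h \in 'N(N) -> (('P^*)%act C h \in orbit_blocks N) = (C \in orbit_blocks N).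
Proof.
have blk D k : k \in 'N(N) -> D \in orbit_blocks N -> ('P^*)%act D k \in orbit_blocks N.
  by move=> kN /imsetP [x _ ->]; rewrite -orbit_conj_perm // imset_f.
move=> hN; apply/idP/idP; last exact: blk.
by move/(blk _ h^-1); rewrite groupV actK; apply.
Qed.

Lemma orbit_blocks_eq C D x :
  C \in orbit_blocks N -> D \in orbit_blocks N -> x \in C -> x \in D -> C = D.
Proof.
move=> /imsetP [c _ ->] /imsetP [d _ ->] xC xD.
have /eqP <- : orbit 'P N x == orbit 'P N c by rewrite orbit_eq_mem.
by apply/eqP; rewrite orbit_eq_mem.
Qed.

Lemma orbit_orbit_blocks (G : {group {perm T}}) a :
  G \subset 'N(N) -> [transitive G, on [set: T] | 'P] ->
  orbit 'P^* G (orbit 'P N a) = orbit_blocks N.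
Proof.
move=> nNG trG; apply/eqP; rewrite eqEsubset; apply/andP; split.
  apply/subsetP => _ /orbitP [h hG <-].
  by rewrite mem_orbit_blocks_conj ?(subsetP nNG) // imset_f.
apply/subsetP => _ /imsetP [x _ ->].
have [h hG ->] := atransP2 trG (in_setT a) (in_setT x).
by rewrite /= apermE orbit_conj_perm ?(subsetP nNG) // mem_orbit.
Qed.

Lemma card_orbit_blocks r :
  (forall x, #|orbit 'P N x| = r) -> #|T| = (#|orbit_blocks N| * r)%N.
Proof.
move=> cardO; have acts_N : [acts N, on [set: T] | 'P] by apply/actsP => n _ x; rewrite !inE.
rewrite -cardsT (card_partition (orbit_partition acts_N)) -sum_nat_const.
have -> : [set orbit 'P N x | x in [set: T]] = orbit_blocks N.
  by apply/setP => C; apply/imsetP/imsetP => [[x _ ->]|[x _ ->]]; exists x.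
by apply: eq_bigr => _ /imsetP [x _ ->].
Qed.

End OrbitBlocks.

End PermOrbits.

(* [X] below stands for a conjugate of a minimal normal subgroup of [N0] that acts
   faithfully on the block [B]. *)
Section FaithfulComponents.
Variables (T : finType) (N0 : {group {perm T}}) (b : T) (l1 l2 : nat).
Let B := orbit 'P N0 b.
Hypotheses (pr_l1 : prime l1) (pr_l2 : prime l2) (lt_l1l2 : l1 < l2)
  (cardB : #|B| = (l1 * l2)%N).

Section Component.
Variable X : {group {perm T}}.
Hypotheses (sXN0 : X \subset N0) (nXN0 : N0 \subset 'N(X)).

Lemma acts_block_component : [acts X, on B | 'P].
Proof. by apply: subset_trans sXN0 (acts_orbit _ _ _); rewrite subsetT. Qed.

Lemma orbit_component_sub c : c \in B -> orbit 'P X c \subset B.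
Proof.
move=> cB; apply/subsetP => _ /orbitP [x xX <-].
by rewrite (actsP acts_block_component).
Qed.

Lemma card_orbit_component c : c \in B -> #|orbit 'P X c| = #|orbit 'P X b|.
Proof.
case/orbitP => n nN0 <-; rewrite /= apermE.
by rewrite (orbit_conj_perm _ (subsetP nXN0 n nN0)) card_setact.
Qed.

Lemma card_orbits_component : (#|orbit 'P X @: B| * #|orbit 'P X b|)%N = (l1 * l2)%N.
Proof.
rewrite -cardB (card_partition (orbit_partition acts_block_component)) -sum_nat_const.
by apply: eq_bigr => _ /imsetP [c cB ->]; rewrite card_orbit_component.
Qed.

Hypotheses (defN0 : N0 \subset X * 'C(X)) (faithX : 'C_X(B | 'P) = 1).

(* Write the element of [N0] carrying [c] to [y] as [x v], with [x] in [X] and [v]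
   centralising [X]; then [k] commutes with [v] and fixes [x c]. *)
Lemma astab_orbit_component c : c \in B -> 'C_X(orbit 'P X c | 'P) = 1.
Proof.
move=> cB; apply/trivgP; rewrite -faithX.
apply/subsetP => k /setIP [kX /astabP kfix]; rewrite inE kX; apply/astabP => y yB.
have : y \in orbit 'P N0 c by apply: orbit_trans yB _; rewrite orbit_sym.
case/orbitP => n nN0 <-; case/mulsgP: (subsetP defN0 n nN0) => x v xX vC ->.
rewrite /= !apermE permM -[k _]permM (centP vC k kX) permM.
by rewrite -[k (x c)]/(aperm (x c) k) kfix // -apermE mem_orbit.
Qed.

Lemma solvable_component (Y : {group {perm T}}) :
  X \subset 'C(Y) -> orbit 'P X b \subset orbit 'P Y b -> solvable X.
Proof.
move=> cXY sXYb.
have regX : 'C_X[b | 'P] = 1.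
  apply/trivgP; rewrite -(astab_orbit_component (orbit_refl _ _ _)) subsetI subsetIl /=.
  exact: subset_trans (astab1_sub_astab_orbit b cXY) (astabS 'P sXYb).
apply: (solvable_dvd_prime2 pr_l2 pr_l1 lt_l1l2).
by rewrite mulnC -card_orbits_component card_orbit regX indexg1 dvdn_mull.
Qed.

Hypothesis l2_dvd_X : (l2 %| #|X|)%N.

(* An element of order [l2] would fix pointwise an orbit of size less than [l2]. *)
Lemma card_orbit_component_ge c : c \in B -> l2 <= #|orbit 'P X c|.
Proof.
move=> cB; rewrite leqNgt; apply/negP => small.
have [y yX oy] := Cauchy pr_l2 l2_dvd_X.
have : y \in 'C_X(orbit 'P X c | 'P).
  rewrite inE yX; apply/astabP => z zO.
  have eO : orbit 'P X z = orbit 'P X c by apply/eqP; rewrite orbit_eq_mem.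
  have sub : orbit 'P <[y]> z \subset orbit 'P X c by rewrite -eO imsetS // cycle_subG.
  have [one | ne1] := eqVneq #|orbit 'P <[y]> z| 1%N.
    by have := mem_orbit 'P z (cycle_id y); rewrite (card_orbit1 one) inE => /eqP.
  have : (#|orbit 'P <[y]> z| %| l2)%N by rewrite -oy orderE dvdn_orbit.
  move/(prime_nt_dvdP pr_l2 ne1) => e.
  by move: (leq_ltn_trans (subset_leq_card sub) small); rewrite e ltnn.
rewrite astab_orbit_component // => /set1P y1.
by move: (prime_gt1 pr_l2); rewrite -oy y1 order1.
Qed.

End Component.

Lemma card_orbit_component_eq (X Y : {group {perm T}}) :
  X \subset N0 -> N0 \subset 'N(X) -> N0 \subset X * 'C(X) -> 'C_X(B | 'P) = 1 ->
  (l2 %| #|X|)%N ->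
  Y \subset N0 -> N0 \subset 'N(Y) -> N0 \subset Y * 'C(Y) -> 'C_Y(B | 'P) = 1 ->
  Y \subset 'C(X) -> ~~ solvable Y -> #|orbit 'P X b| = l2.
Proof.
move=> sXN0 nXN0 defX faithX l2X sYN0 nYN0 defY faithY cYX nsolY.
have cnt := card_orbits_component sXN0 nXN0.
apply: (dvd_prime2_ge_eq pr_l1 pr_l2 lt_l1l2 cnt).
  exact: card_orbit_component_ge (orbit_refl _ _ _).
apply: contraNneq nsolY => one_orbit.
apply: (solvable_component sYN0 nYN0 defY faithY cYX).
have -> : orbit 'P X b = B.
  apply/eqP; rewrite eqEcard orbit_component_sub ?orbit_refl //=.
  by rewrite cardB -cnt one_orbit mul1n.
exact: orbit_component_sub (orbit_refl _ _ _).
Qed.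

(* [X2] permutes the [X1]-orbits, and the [X2]-orbit of [orbit X1 b] has size
   dividing [l2] but smaller than [l2]. *)
Lemma orbit_sub_orbit_component (X1 X2 : {group {perm T}}) :
  X2 \subset N0 -> X2 \subset 'N(X1) -> #|orbit 'P X1 @: B| < l2 ->
  #|orbit 'P X2 b| = l2 -> orbit 'P X2 b \subset orbit 'P X1 b.
Proof.
move=> sX2N0 nX12 few_orbits cardX2b; set O := orbit 'P X1 b.
have sCN : 'C_X2[b | 'P] \subset 'N_X2(O | 'P).
  apply/subsetP => x /setIP [xX2 /astab1P xb]; rewrite inE xX2; apply/astabsP => z.
  by have := orbit_conjsg 'P X1 x b z; rewrite (normP (subsetP nX12 x xX2)) xb.
have dvd_l2 : (#|X2 : 'N_X2(O | 'P)| %| l2)%N by rewrite -cardX2b card_orbit indexgS.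
have lt_l2 : #|X2 : 'N_X2(O | 'P)| < l2.
  rewrite -astab1_set -card_orbit; apply: leq_ltn_trans few_orbits; apply: subset_leq_card.
  apply/subsetP => _ /orbitP [x xX2 <-]; rewrite /O -orbit_conj_perm ?(subsetP nX12) //.
  by apply: imset_f; rewrite -[x b]apermE (actsP (acts_block_component sX2N0)) ?orbit_refl.
have : #|X2 : 'N_X2(O | 'P)| = 1%N.
  case/primeP: pr_l2 => _ /(_ _ dvd_l2) /orP [/eqP // | /eqP e].
  by rewrite e ltnn in lt_l2.
move/eqP; rewrite indexg_eq1 subsetI => /andP [_ nO].
apply/subsetP => _ /orbitP [x xX2 <-].
by rewrite (astabsP (subsetP nO x xX2)) orbit_refl.
Qed.

Lemma no_commuting_faithful_components (X1 X2 : {group {perm T}}) :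
  X1 \subset N0 -> N0 \subset 'N(X1) -> N0 \subset X1 * 'C(X1) -> 'C_X1(B | 'P) = 1 ->
  (l2 %| #|X1|)%N -> ~~ solvable X1 ->
  X2 \subset N0 -> N0 \subset 'N(X2) -> N0 \subset X2 * 'C(X2) -> 'C_X2(B | 'P) = 1 ->
  (l2 %| #|X2|)%N -> ~~ solvable X2 ->
  X2 \subset 'C(X1) -> False.
Proof.
move=> sX1 nX1 def1 faith1 l2X1 nsol1 sX2 nX2 def2 faith2 l2X2 nsol2 cX21.
have o1 := card_orbit_component_eq sX1 nX1 def1 faith1 l2X1 sX2 nX2 def2 faith2 cX21 nsol2.
have cX12 : X1 \subset 'C(X2) by rewrite centsC.
have o2 := card_orbit_component_eq sX2 nX2 def2 faith2 l2X2 sX1 nX1 def1 faith1 cX12 nsol1.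
have few : #|orbit 'P X1 @: B| < l2.
  have /eqP := card_orbits_component sX1 nX1.
  by rewrite o1 eqn_pmul2r ?prime_gt0 // => /eqP ->.
move/negP: nsol2; apply; apply: (solvable_component sX2 nX2 def2 faith2 cX21).
exact: orbit_sub_orbit_component sX2 (subset_trans cX21 (cent_sub X1)) few o2.
Qed.

End FaithfulComponents.

Section KernelTransitivity.
Variables (T : finType) (G N0 : {group {perm T}}) (l1 l2 : nat) (a0 : T).
Hypotheses (nN0G : N0 <| G) (minN0 : minnormal N0 G) (trG : [transitive G, on [set: T] | 'P])
  (pr_l1 : prime l1) (pr_l2 : prime l2) (lt_l1l2 : l1 < l2)
  (cardO : forall x, #|orbit 'P N0 x| = (l1 * l2)%N)
  (pr_blocks : prime #|orbit_blocks N0|)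
  (ntK : 'C_N0(orbit 'P N0 a0 | 'P) != 1).

Let nN0 : G \subset 'N(N0) := normal_norm nN0G.

Lemma l2_dvd_minnormal : (l2 %| #|N0|)%N.
Proof. by apply: dvdn_trans (dvdn_orbit 'P N0 a0); rewrite cardO dvdn_mull. Qed.

Lemma minnormal_nonabelian : ~~ abelian N0.
Proof.
apply/negP => abN0.
have [_ _ /is_abelemP [l _ /abelem_pgroup lN0]] :=
  minnormal_solvable minN0 (subxx N0) (abelian_sol abN0).
have : l.-nat (l1 * l2)%N by apply: pnat_dvd lN0; rewrite -(cardO a0) dvdn_orbit.
rewrite pnatM !pnatE // !inE => /andP [/eqP e1 /eqP e2].
by move: lt_l1l2; rewrite e1 e2 ltnn.
Qed.

Definition block_support (X : {set {perm T}}) :=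
  [set C in orbit_blocks N0 | ~~ (X \subset 'C(C | 'P))].

Lemma mem_block_supportJ (X : {set {perm T}}) C h : h \in 'N(N0) ->
  (('P^*)%act C h \in block_support (X :^ h)) = (C \in block_support X).
Proof. by move=> hN; rewrite !inE mem_orbit_blocks_conj // astab_setact conjSg. Qed.

Section MinnormalComponent.
Variable M : {group {perm T}}.
Hypotheses (minM : minnormal M N0) (sMN0 : M \subset N0).

Lemma astab_conj_block g x : g \in G -> ~~ (M :^ g \subset 'C(orbit 'P N0 x | 'P)) ->
  'C_(M :^ g)(orbit 'P N0 x | 'P) = 1.
Proof.
move=> gG ntMg; have [_ minP] := mingroupP (minnormal_conj nN0 minM gG).
apply/eqP; apply: contraR ntMg => ntK'.
have nK : N0 \subset 'N('C_(M :^ g)(orbit 'P N0 x | 'P)).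
  rewrite normsI ?(norm_conj_minnormal nN0 minM gG) //.
  exact: subset_trans (acts_orbit _ _ (subsetT N0)) (astab_norm _ _).
by rewrite -(minP [group of 'C_(M :^ g)(orbit 'P N0 x | 'P)]) ?ntK' ?nK ?subsetIl ?subsetIr.
Qed.

(* Two distinct conjugates acting nontrivially on a block would be commuting faithful
   components. *)
Lemma block_support_conj_eq g1 g2 C : g1 \in G -> g2 \in G ->
  C \in block_support (M :^ g1) -> C \in block_support (M :^ g2) -> M :^ g1 = M :^ g2.
Proof.
move=> g1G g2G /setIdP [/imsetP [x _ ->] nt1] /setIdP [_ nt2].
apply/eqP; apply: contraT => ne12.
have component g : g \in G -> ~~ (M :^ g \subset 'C(orbit 'P N0 x | 'P)) ->
  [/\ M :^ g \subset N0, N0 \subset 'N(M :^ g), N0 \subset M :^ g * 'C(M :^ g),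
      'C_(M :^ g)(orbit 'P N0 x | 'P) = 1 & (l2 %| #|M :^ g|)%N].
  move=> gG ntg; split.
  - exact: (conj_sub_minnormal nN0 sMN0 gG).
  - exact: (norm_conj_minnormal nN0 minM gG).
  - exact: (minnormal_sub_conj_mul_cent nN0 minM sMN0 minN0 gG).
  - exact: (astab_conj_block gG ntg).
  - by rewrite cardJg (minnormal_prime_dvd nN0 minM sMN0 minN0 pr_l2 l2_dvd_minnormal).
have nsol g : g \in G -> ~~ solvable (M :^ g).
  by move=> gG; apply: (nonsolvable_conj_minnormal nN0 minM sMN0 minN0 gG minnormal_nonabelian).
have [s1 n1 d1 f1 l1X1] := component g1 g1G nt1; have ns1 := nsol g1 g1G.
have [s2 n2 d2 f2 l2X2] := component g2 g2G nt2; have ns2 := nsol g2 g2G.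
exfalso; apply: (no_commuting_faithful_components pr_l1 pr_l2 lt_l1l2 (cardO x)
  s1 n1 d1 f1 l1X1 ns1 s2 n2 d2 f2 l2X2 ns2).
apply: minnormal_cents (minnormal_conj nN0 minM g2G) (minnormal_conj nN0 minM g1G) s2 s1 _.
by rewrite eq_sym.
Qed.

Lemma exists_block_support_conj x : exists2 g, g \in G & orbit 'P N0 x \in block_support (M :^ g).
Proof.
have [/exists_inP [g gG xg] | ] := boolP [exists g in G, orbit 'P N0 x \in block_support (M :^ g)].
  by exists g.
rewrite negb_exists_in => /forall_inP triv; exfalso.
have sN0 : N0 \subset 'C([set x] | 'P).
  rewrite {1}(minnormal_gen_class_support nN0 minM sMN0 minN0) gen_subG class_supportEr.
  apply/bigcupsP => g gG; have sx : [set x] \subset orbit 'P N0 x by rewrite sub1set orbit_refl.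
  apply: subset_trans (astabS 'P sx).
  by have := triv g gG; rewrite inE imset_f //= negbK.
have := cardO x; rewrite card_orbit (setIidPl sN0) indexgg => /esym/eqP.
by rewrite muln_eq1 => /andP [/eqP l1_1 _]; move: pr_l1; rewrite l1_1.
Qed.

Lemma block_support_conj_neq0 g : block_support (M :^ g) != set0.
Proof.
apply/set0Pn.
have [/existsP [x ntx] | ] := boolP [exists x, ~~ (M :^ g \subset 'C(orbit 'P N0 x | 'P))].
  by exists (orbit 'P N0 x); rewrite inE imset_f.
rewrite negb_exists => /forallP triv; exfalso.
have [/andP [ntM _] _] := mingroupP minM; move: ntM; rewrite -(conjsg_eq1 _ g).
apply/negP; rewrite negbK -subG1; apply: subset_trans (perm_faithful (M :^ g)).
rewrite subsetI subxx; apply/subsetP => y yM; apply/astabP => x _.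
by have := triv x; rewrite negbK => /subsetP/(_ y yM)/astabP; apply; apply: orbit_refl.
Qed.

(* The setwise stabiliser of the support of [M :^ g] acts transitively on it and
   contains the stabiliser of a block in the support. *)
Lemma card_block_support_dvd g : g \in G ->
  (#|block_support (M :^ g)| %| #|orbit_blocks N0|)%N.
Proof.
move=> gG; set S := block_support (M :^ g); set J := 'N_G(S | 'P^*).
have /set0Pn [A AS] := block_support_conj_neq0 g.
have key h : h \in G -> ('P^*)%act A h \in S -> h \in J.
  move=> hG AhS; have hN := subsetP nN0 h hG.
  have eM : M :^ (g * h) = M :^ g.
    by apply: block_support_conj_eq (groupM gG hG) gG _ AhS; rewrite conjsgM mem_block_supportJ.
  rewrite inE hG; apply/astabsP => C.
  by rewrite /S -{1}eM conjsgM mem_block_supportJ.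
have sGAJ : 'C_G[A | 'P^*] \subset J.
  by apply/subsetP => h /setIP [hG /astab1P Ah]; apply: key; rewrite ?Ah.
have [a _ defA] := imsetP (setIdP AS).1.
have orbGA : orbit 'P^* G A = orbit_blocks N0 by rewrite defA orbit_orbit_blocks.
have orbJA : orbit 'P^* J A = S.
  apply/eqP; rewrite eqEsubset; apply/andP; split.
    by apply/subsetP => _ /orbitP [h /setIP [_ /astabsP JS] <-]; rewrite JS.
  apply/subsetP => C CS; have := (setIdP CS).1; rewrite -orbGA => /orbitP [h hG eC].
  by rewrite -eC mem_orbit // key // eC.
have eJA : 'C_J[A | 'P^*] = 'C_G[A | 'P^*].
  by apply/eqP; rewrite eqEsubset setSI ?subsetIl // subsetI sGAJ subsetIr.
rewrite -orbJA -orbGA !card_orbit eJA.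
by rewrite -(Lagrange_index (subsetIl G _) sGAJ) dvdn_mull.
Qed.

(* A support of full size would give [N0 = M :^ g], acting faithfully on every block. *)
Lemma card_block_support g : g \in G -> #|block_support (M :^ g)| = 1%N.
Proof.
move=> gG; have := card_block_support_dvd gG.
case/primeP: pr_blocks => _ /[apply] /orP [/eqP // | /eqP full].
have eS : block_support (M :^ g) = orbit_blocks N0.
  apply/eqP; rewrite eqEcard full leqnn andbT.
  by apply/subsetP => C /setIdP [].
have sN0 : N0 \subset M :^ g.
  rewrite (minnormal_gen_class_support nN0 minM sMN0 minN0) gen_subG class_supportEr.
  apply/bigcupsP => h hG; have /set0Pn [C Ch] := block_support_conj_neq0 h.
  by rewrite (block_support_conj_eq hG gG Ch) // eS (setIdP Ch).1.
have : orbit 'P N0 a0 \in block_support (M :^ g) by rewrite eS imset_f.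
case/setIdP => _ /(astab_conj_block gG) faith.
by move/negP: ntK; case; apply/eqP/trivgP; rewrite -faith setSI.
Qed.

(* The only conjugate [M :^ g] acting nontrivially on the block of [b] fixes the block of
   [a] pointwise, and all other conjugates fix the block of [b] pointwise, so that
   [N0 = M :^ g * 'C(block of b)]. *)
Lemma astab_block_transitive a b b' : orbit 'P N0 a != orbit 'P N0 b ->
  b' \in orbit 'P N0 b -> exists2 k, k \in 'C_N0(orbit 'P N0 a | 'P) & k b = b'.
Proof.
move=> neAB b'B; have [g gG Bg] := exists_block_support_conj b.
have /cards1P [C eS] : #|block_support (M :^ g)| == 1%N by rewrite card_block_support.
have sMgN0 := conj_sub_minnormal nN0 sMN0 gG.
have trA : M :^ g \subset 'C(orbit 'P N0 a | 'P).
  apply: contraR neAB => ntA.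
  have : orbit 'P N0 a \in block_support (M :^ g) by rewrite inE imset_f.
  by move: Bg; rewrite eS => /set1P -> /set1P ->.
have acts_B : N0 \subset 'N('C(orbit 'P N0 b | 'P)).
  exact: subset_trans (acts_orbit _ _ (subsetT N0)) (astab_norm _ _).
have defN0 : N0 \subset M :^ g * 'C(orbit 'P N0 b | 'P).
  rewrite -norm_joinEl ?(subset_trans sMgN0 acts_B) //.
  rewrite {1}(minnormal_gen_class_support nN0 minM sMN0 minN0) gen_subG class_supportEr.
  apply/bigcupsP => h hG; have [Bh | ] := boolP (orbit 'P N0 b \in block_support (M :^ h)).
    by rewrite (block_support_conj_eq hG gG Bh Bg) joing_subl.
  by rewrite inE imset_f //= negbK => /subset_trans; apply; apply: joing_subr.
case/orbitP: b'B => n nN0n <-; case/mulsgP: (subsetP defN0 n nN0n) => x k xM kC ->.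
exists x; first by rewrite inE (subsetP sMgN0 x xM) (subsetP trA x xM).
rewrite /= apermE permM -[k (x b)]/(aperm (x b) k) (astabP kC) //.
by rewrite -apermE mem_orbit // (subsetP sMgN0).
Qed.

End MinnormalComponent.

Lemma astab_minnormal_block_transitive a b b' : orbit 'P N0 a != orbit 'P N0 b ->
  b' \in orbit 'P N0 b -> exists2 k, k \in 'C_N0(orbit 'P N0 a | 'P) & k b = b'.
Proof.
have [/andP [ntN0 _] _] := mingroupP minN0.
have [M minM sMN0] := minnormal_exists ntN0 (normG N0).
exact: (astab_block_transitive minM sMN0).
Qed.

End KernelTransitivity.

Lemma cycle_iota (R : rel nat) n :
  (forall t, t < n -> R t (t.+1 %% n)) -> path.cycle R (iota 0 n).
Proof.
case: n => // n adj; apply/(pathP 0) => i; rewrite size_rcons size_iota ltnS => le_in.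
have -> : 0 :: rcons (iota 1 n) 0 = rcons (iota 0 n.+1) 0 by [].
rewrite !nth_rcons !size_iota ltnS le_in nth_iota // add0n -/(iota 1 n).
have := adj i; rewrite ltnS le_in => /(_ isT).
case: ltngtP le_in => // [lt_in | ->] _; first by rewrite modn_small ?ltnS // nth_iota.
by rewrite modnn.
Qed.

Section BlockCycle.
Variables (T : finType) (e : rel T) (f : {set T} -> {set T}) (A : {set T}) (r : nat).
Let m := fingraph.order f A.
Hypotheses (inj_f : injective f) (cardT : #|T| = (m * r)%N)
  (card_iter : forall j, #|iter j f A| = r)
  (iter_eq : forall i j x, x \in iter i f A -> x \in iter j f A -> iter i f A = iter j f A)
  (iter_edge : forall j x y, x \in iter j f A -> y \in iter j.+1 f A -> e x y).

Lemma iter_modn_order j : iter (j %% m) f A = iter j f A.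
Proof.
have iter_mul k : iter (k * m) f A = A.
  by elim: k => //= k IHk; rewrite mulSn iterD IHk iter_order.
by rewrite {2}(divn_eq j m) addnC iterD iter_mul.
Qed.

Lemma iter_eq_modn i j : iter i f A = iter j f A -> i = j %[mod m].
Proof.
rewrite -iter_modn_order -[iter j f A]iter_modn_order => eij.
have ltm k : k %% m < m by rewrite ltn_mod fingraph.order_gt0.
apply/eqP; rewrite -(nth_uniq A _ _ (orbit_uniq f A)) ?size_orbit ?ltm //.
by rewrite /fingraph.orbit !nth_traject ?ltm ?eij.
Qed.

(* Go [r] times around the cycle of blocks, visiting in round [k] the [k]-th vertex of
   each block. *)
Lemma hamiltonian_of_block_cycle : hamiltonian e.
Proof.
have [r0 | r_gt0] := posnP r.
  by exists [::]; rewrite cardT r0 muln0.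
have [x0 _] : exists x0, x0 \in A by apply/card_gt0P; rewrite (card_iter 0).
pose v t := nth x0 (enum (iter t f A)) (t %/ m).
have v_in t : t < m * r -> v t \in iter t f A.
  move=> lt_t; rewrite -mem_enum mem_nth // -cardE card_iter.
  by rewrite ltn_divLR ?fingraph.order_gt0 // mulnC.
exists [seq v t | t <- iota 0 (m * r)]; split.
- rewrite map_inj_in_uniq ?iota_uniq // => t1 t2; rewrite !mem_iota /= => lt1 lt2 ev.
  have /iter_eq_modn em : iter t1 f A = iter t2 f A.
    by apply: (iter_eq (v_in _ lt1)); rewrite ev v_in.
  have ed : t1 %/ m = t2 %/ m.
    move: ev; rewrite /v -iter_modn_order em iter_modn_order.
    have lt_r t : t < m * r -> t %/ m < #|iter t2 f A|.
      by rewrite card_iter ltn_divLR ?fingraph.order_gt0 // mulnC.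
    by move/eqP; rewrite nth_uniq ?enum_uniq -?cardE ?lt_r // => /eqP.
  by rewrite (divn_eq t1 m) (divn_eq t2 m) em ed.
- by rewrite size_map size_iota cardT.
- rewrite cycle_map; apply: cycle_iota => t lt_t /=; apply: iter_edge (v_in t lt_t) _.
  have -> : iter t.+1 f A = iter (t.+1 %% (m * r)) f A.
    by rewrite -iter_modn_order -[in RHS]iter_modn_order (modn_dvdm _ (dvdn_mulr r (dvdnn m))).
  by apply: v_in; rewrite ltn_mod muln_gt0 fingraph.order_gt0.
Qed.

End BlockCycle.

Section CyclicOrbits.
Variables (aT : finGroupType) (rT : finType) (to : {action aT &-> rT}).

Lemma fconnect_act_cycle w x y : fconnect (to^~ w) x y = (y \in orbit to <[w]> x).
Proof.
apply/idP/idP => [/iter_findex <- | /orbitP [_ /cycleP [i ->] <-]]; last first.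
  by rewrite actX fconnect_iter.
by rewrite -actX mem_orbit ?mem_cycle.
Qed.

Lemma order_act_cycle w x : fingraph.order (to^~ w) x = #|orbit to <[w]> x|.
Proof. by apply: eq_card => y; rewrite -fconnect_act_cycle. Qed.

Variables (G : {group aT}) (x : rT).
Hypothesis pr_orbit : prime #|orbit to G x|.
Let m := #|orbit to G x|.

Lemma orbit_pgroup_prime (Q : {group aT}) : Q \subset G -> m.-group Q ->
  (exists2 q, q \in Q & to x q != x) -> orbit to Q x = orbit to G x.
Proof.
move=> sQG mQ [q qQ mvq]; have sub : orbit to Q x \subset orbit to G x by apply: imsetS.
have gt1 : 1 < #|orbit to Q x|.
  have s2 : [set x; to x q] \subset orbit to Q x.
    by apply/subsetP => z; rewrite !inE => /orP [] /eqP ->; rewrite ?orbit_refl ?mem_orbit.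
  by apply: leq_trans (subset_leq_card s2); rewrite cards2 eq_sym mvq.
have [k ek] := p_natP (pnat_dvd (dvdn_orbit to Q x) mQ).
apply/eqP; rewrite eqEcard sub ek /=; rewrite ek in gt1; case: k {ek} gt1 => // k _.
by rewrite expnS leq_pmulr ?expn_gt0 ?prime_gt0.
Qed.

(* A Sylow [m]-subgroup of [G] cannot fix [x], so it is transitive on the orbit, and
   so is the cyclic group generated by any of its elements moving [x]. *)
Lemma prime_orbit_cycle y : y \in orbit to G x -> y != x ->
  exists2 w, w \in G & to x w = y /\ orbit to <[w]> x = orbit to G x.
Proof.
move=> yGx neyx; have [P sylP] := Sylow_exists m G; have [sPG mP m'iP] := and3P sylP.
have [p pP mvp] : exists2 p, p \in P & to x p != x.
  have [sPx | /subsetPn [p pP npx]] := boolP (P \subset 'C[x | to]); last first.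
    by exists p => //; apply: contra npx => /eqP px; apply/astab1P.
  have sPGx : P \subset 'C_G[x | to] by rewrite subsetI sPG.
  move: m'iP; rewrite -(Lagrange_index (subsetIl G _) sPGx) -card_orbit -/m.
  by rewrite p'natE // dvdn_mulr.
have : y \in orbit to P x by rewrite (orbit_pgroup_prime sPG mP) //; exists p.
case/orbitP => w wP eyw; exists w; first exact: (subsetP sPG).
split=> //; apply: orbit_pgroup_prime; first by rewrite cycle_subG (subsetP sPG).
  by apply: pgroupS mP; rewrite cycle_subG.
by exists w; rewrite ?cycle_id // eyw.
Qed.

End CyclicOrbits.

Definition blocks_complete (T : finType) (e : rel T) (N : {group {perm T}}) :=
  forall A B, A \in orbit_blocks N -> B \in orbit_blocks N -> A != B ->
    (exists a b, [/\ a \in A, b \in B & e a b]) ->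
    forall a b, a \in A -> b \in B -> e a b.

Lemma autg_edge (T : finType) (e : rel T) g x y : g \in autg e -> e (g x) (g y) = e x y.
Proof. by rewrite inE => /forallP/(_ x)/forallP/(_ y)/eqP. Qed.

Lemma blocks_complete_astab_transitive (T : finType) (e : rel T) (N : {group {perm T}}) :
  N \subset autg e ->
  (forall a b b', orbit 'P N a != orbit 'P N b -> b' \in orbit 'P N b ->
     exists2 k, k \in 'C_N(orbit 'P N a | 'P) & k b = b') ->
  blocks_complete e N.
Proof.
move=> sNaut trans _ _ /imsetP [x _ ->] /imsetP [y _ ->] neXY [a [b [aX bY eab]]] a' b' a'X b'Y.
have /eqP eX : orbit 'P N a == orbit 'P N x by rewrite orbit_eq_mem.
have /eqP eY : orbit 'P N b == orbit 'P N y by rewrite orbit_eq_mem.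
rewrite -eX -eY in neXY a'X b'Y.
have neYX : orbit 'P N b != orbit 'P N a by rewrite eq_sym.
have [k /setIP [kN /astabP kfix] kb] := trans a b b' neXY b'Y.
have [k' /setIP [k'N /astabP k'fix] k'a] := trans b a a' neYX a'X.
have ka : k a = a := kfix a (orbit_refl 'P N a).
have k'b' : k' b' = b' := k'fix b' b'Y.
by rewrite -k'a -k'b' autg_edge ?(subsetP sNaut) // -kb -{1}ka autg_edge ?(subsetP sNaut).
Qed.

Lemma connect_exit_edge (T : finType) (e : rel T) (P : pred T) x y :
  connect e x y -> P x -> ~~ P y -> exists u v, [/\ P u, ~~ P v & e u v].
Proof.
case/connectP => p; elim: p x => [|z p IHp] x /=; first by move=> _ -> ->.
case/andP => exz pz ly Px nPy; have [Pz | nPz] := boolP (P z).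
  exact: IHp pz ly Pz nPy.
by exists x, z.
Qed.

Section HamiltonCycle.
Variables (T : finType) (e : rel T) (G N : {group {perm T}}) (r : nat).
Hypotheses (sGaut : G \subset autg e) (nNG : G \subset 'N(N))
  (trG : [transitive G, on [set: T] | 'P]) (conn : connected_graph e)
  (cardO : forall x, #|orbit 'P N x| = r) (pr_blocks : prime #|orbit_blocks N|)
  (complete : blocks_complete e N).

(* Some [w] in [G] maps a block to an adjacent one and permutes all blocks cyclically. *)
Lemma hamiltonian_blocks_complete : hamiltonian e.
Proof.
have /set0Pn [A Ablk] : orbit_blocks N != set0 by rewrite -card_gt0 prime_gt0.
have [a _ defA] := imsetP Ablk.
have orbGA : orbit 'P^* G A = orbit_blocks N by rewrite defA orbit_orbit_blocks.
have [y yA] : exists y, y \notin A.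
  apply/existsP; apply: contraLR pr_blocks; rewrite negb_exists => /forallP inA.
  have : orbit_blocks N \subset [set A].
    apply/subsetP => _ /imsetP [z _ ->]; rewrite inE defA orbit_eq_mem -defA.
    by have := inA z; rewrite negbK.
  move/subset_leq_card; rewrite cards1 => le1.
  by apply/negP => /prime_gt1; rewrite ltnNge le1.
have aA : a \in A by rewrite defA orbit_refl.
have [u [v [uA vA euv]]] := connect_exit_edge (P := mem A) (conn a y) aA yA.
have eA : A = orbit 'P N u by apply/eqP; rewrite defA eq_sym orbit_eq_mem -defA.
have Cblk : orbit 'P N v \in orbit_blocks N by apply: imset_f.
have neAC : orbit 'P N v != A by apply: contraNneq vA => <-; apply: orbit_refl.
have [w wG [Aw oW]] : exists2 w, w \in G & ('P^*)%act A w = orbit 'P N v /\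
    orbit 'P^* <[w]> A = orbit 'P^* G A.
  by apply: prime_orbit_cycle neAC; rewrite orbGA.
set f := fun S : {set T} => ('P^*)%act S w.
have blk j : iter j f A \in orbit_blocks N.
  by rewrite -actX mem_orbit_blocks_conj ?(subsetP nNG) ?groupX.
apply: (@hamiltonian_of_block_cycle T e f A r).
- exact: act_inj.
- by rewrite order_act_cycle oW orbGA -(card_orbit_blocks cardO).
- by move=> j; have /imsetP [z _ ->] := blk j.
- by move=> i j z; apply: orbit_blocks_eq.
- elim=> [|j IHj] x' y'.
    move=> x'A; rewrite /= -/(f A) /f Aw => y'C.
    apply: (complete Ablk Cblk _ _ x'A y'C); first by rewrite eq_sym.
    by exists u, v; split=> //; apply: orbit_refl.
  rewrite [iter j.+1 _ _]/= [iter j.+2 _ _]/= /f /setact.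
  move=> /imsetP [x0 x0j ->] /imsetP [y0 y0j ->].
  by rewrite /= !apermE autg_edge ?(subsetP sGaut) // IHj.
Qed.

End HamiltonCycle.

Theorem minnormal_blocks_complete_hamiltonian (T : finType) (e : rel T)
    (G N0 : {group {perm T}}) (l1 l2 : nat) (a0 : T) :
  G \subset autg e -> [transitive G, on [set: T] | 'P] -> connected_graph e ->
  N0 <| G -> minnormal N0 G -> prime l1 -> prime l2 -> l1 < l2 ->
  (forall x, #|orbit 'P N0 x| = (l1 * l2)%N) -> prime #|orbit_blocks N0| ->
  'C_N0(orbit 'P N0 a0 | 'P) != 1 ->
  blocks_complete e N0 /\ hamiltonian e.
Proof.
move=> sGaut trG conn nN0G minN0 pr_l1 pr_l2 lt_l1l2 cardO pr_blocks ntK.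
have complete : blocks_complete e N0.
  apply: blocks_complete_astab_transitive (subset_trans (normal_sub nN0G) sGaut) _.
  exact: astab_minnormal_block_transitive nN0G minN0 trG pr_l1 pr_l2 lt_l1l2 cardO pr_blocks ntK.
split=> //.
exact: hamiltonian_blocks_complete sGaut (normal_norm nN0G) trG conn cardO pr_blocks complete.
Qed.

Close Scope group_scope.

Theorem lemma3p4 (p q : nat) (T : finType) (e : rel T)
    (G N N0 : {group {perm T}}) (r : nat) :
  prime p -> 7 <= p -> prime q -> odd q -> q < p ->
  simple_graph e -> #|T| = 2 * p * q ->
  connected_graph e -> vertex_transitive e ->
  minimal_transitive e G ->
  (N <| G)%g -> N :!=: 1%g ->
  (forall x : T, #|orbit 'P N x| = r) ->
  r \in [:: 2 * p; 2 * q; p * q] ->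
  (N0 <| G)%g -> minnormal N0 G ->
  (forall x : T, orbit 'P N0 x = orbit 'P N x) ->
  (exists2 A, A \in orbit_blocks N &
     exists2 g, g \in N0 & g != 1%g /\ (forall a, a \in A -> g a = a)) ->
  (forall A B, A \in orbit_blocks N -> B \in orbit_blocks N -> A != B ->
     (exists a b, [/\ a \in A, b \in B & e a b]) ->
     forall a b, a \in A -> b \in B -> e a b)
  /\ hamiltonian e.
Proof.
move=> pr_p _ pr_q odd_q lt_qp _ cardT conn _ [sGaut trG _] _ _ cardN r_in nN0G minN0 eorb
  [_ /imsetP [a0 _ ->] [g gN0 [ntg gfix]]].
have eblocks : orbit_blocks N0 = orbit_blocks N by apply: eq_imset.
rewrite -eblocks.
have cardO x : #|orbit 'P N0 x| = r by rewrite eorb cardN.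
have ntK : ('C_N0(orbit 'P N0 a0 | 'P) != 1)%g.
  apply: contraNneq ntg => K1.
  suff : g \in ('C_N0(orbit 'P N0 a0 | 'P))%g by rewrite K1 => /set1P ->.
  by rewrite inE gN0; apply/astabP => x; rewrite eorb => /gfix.
have r_gt0 : 0 < r by rewrite -(cardO a0) card_gt0; apply/set0Pn; exists a0; apply: orbit_refl.
have core l1 l2 m : prime l1 -> prime l2 -> l1 < l2 -> prime m ->
    r = (l1 * l2)%N -> (2 * p * q = m * r)%N -> blocks_complete e N0 /\ hamiltonian e.
  move=> pr_l1 pr_l2 lt_l1l2 pr_m def_r def_T.
  apply: (minnormal_blocks_complete_hamiltonian sGaut trG conn nN0G minN0
    pr_l1 pr_l2 lt_l1l2 _ _ ntK); first by move=> x; rewrite cardO def_r.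
  suff -> : #|orbit_blocks N0| = m by [].
  by apply/eqP; rewrite -(eqn_pmul2r r_gt0) -(card_orbit_blocks cardO) cardT def_T.
have q_gt2 : 2 < q by case: q pr_q odd_q {lt_qp cardT r_in core} => [|[|[]]].
have p_gt2 : 2 < p := ltn_trans q_gt2 lt_qp.
move: r_in; rewrite !inE => /or3P [] /eqP def_r.
- by apply: (core 2 p q); rewrite // def_r mulnC.
- by apply: (core 2 q p); rewrite // def_r mulnCA mulnA.
- by apply: (core q p 2); rewrite // def_r; [rewrite mulnC | rewrite mulnA].
Qed.
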